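(* Let $\mathcal{T}=\{T(t,s):t\ge s\}$ be a linear evolution process in a Banach space $X$, $f:\mathbb{R}\times X\to X$ continuous and differentiable in $x$ with continuous derivative, and assume the mild solutions $y(t,s;y_s)=T(t,s)y_s+\int_s^tT(t,\tau)f(\tau,y(\tau,s;y_s))d\tau$ exist for all $t\ge s$, defining the nonlinear evolution process $\mathcal{S}_f$, $S_f(t,s)y_s=y(t,s;y_s)$. Let $\xi$ be a global solution of $\mathcal{S}_f$ which is nonuniform hyperbolic, i.e. its linearized process $\mathcal{L}_f$ admits a nonuniform exponential dichotomy with projections $\{Q(s)\}$, bound $K(s)=De^{\nu|s|}$ and exponent $\alpha>\nu$. Then: (a) every bounded global solution $\varphi$ of $\mathcal{S}_f$ satisfies $$\varphi(t)=\int_{-\infty}^{+\infty}G_f(t,\tau)\big[f(\tau,\varphi(\tau))-D_xf(\tau,\xi(\tau))\varphi(\tau)\big]d\tau,\quad t\in\mathbb{R},$$ where $G_f(t,s)=L_f(t,s)(Id_X-Q(s))$ for $t\ge s$ and $G_f(t,s)=-L_f(t,s)Q(s)$ for $t<s$; (b) if moreover $\xi$ is bounded and $$\rho(\epsilon):=\sup_{0<\|x\|\le\epsilon}\sup_{t\in\mathbb{R}}\frac{e^{\nu|t|}\|f(t,\xi(t)+x)-f(t,\xi(t))-D_xf(t,\xi(t))x\|}{\|x\|}\to0\ \text{ as }\epsilon\to0,$$ then $\xi$ is isolated in $C_b(\mathbb{R},X)$: there is $\epsilon>0$ such that $\xi$ is the only bounded global solution $\varphi$ of $\mathcal{S}_f$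 with $\sup_{t\in\mathbb{R}}\|\varphi(t)-\xi(t)\|\le\epsilon$.
   Context: A global solution of an evolution process $\mathcal{S}$ is a map $\xi:\mathbb{R}\to X$ with $S(t,s)\xi(s)=\xi(t)$ for all $t\ge s$. The linearized evolution process of $\mathcal{S}_f$ along $\xi$ is the linear evolution process $\mathcal{L}_f=\{L_f(t,s):t\ge s\}$ satisfying $L_f(t,s)=T(t,s)+\int_s^tT(t,\tau)D_xf(\tau,\xi(\tau))L_f(\tau,s)d\tau$; $\xi$ is a nonuniform hyperbolic solution if $\mathcal{L}_f$ admits a nonuniform exponential dichotomy. A linear evolution process $\{S(t,s)\}$ admits a nonuniform exponential dichotomy if there is a family of bounded projections $\{Q(t)\}_{t\in\mathbb{R}}$ with: (i) $Q(t)S(t,s)=S(t,s)Q(s)$ for $t\ge s$; (ii) $S(t,s)|_{R(Q(s))}:R(Q(s))\to R(Q(t))$ is an isomorphism for $t\ge s$, with inverse denoted $S(s,t)$; (iii) there are a continuous $K:\mathbb{R}\to[1,\infty)$ with $K(s)\le De^{\nu|s|}$ ($D\ge1$, $\nu\ge0$) and $\alpha>0$ with $\|S(t,s)(Id-Q(s))\|\le K(s)e^{-\alpha(t-s)}$ for $t\ge s$ and $\|S(t,s)Q(s)\|\le K(s)e^{\alpha(t-s)}$ for $t<s$. $C_b(\mathbb{R},X)$ denotes the bounded continuous functions $\mathbb{R}\to X$ with the sup norm. *)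

(* X is a real Banach space, i.e. a
   CompleteNormedModule over R_AbsRing; integrals of X-valued functions are
   Coquelicot's (Riemann) integrals is_RInt / improper integrals is_RInt_gen. *)
From Stdlib Require Import Reals.
From Coquelicot Require Export Coquelicot.
Open Scope R_scope.

Section Defs.
Context {X : CompleteNormedModule R_AbsRing}.

(* bounded linear operator on X (Coquelicot's is_linear includes the bound) *)
Definition bounded_linear (l : X -> X) : Prop := is_linear l.

(* Values S t s for t < s are irrelevant here. *)
Definition lin_evolution_process (S : R -> R -> X -> X) : Prop :=
  (forall t s, s <= t -> bounded_linear (S t s)) /\
  (forall t x, S t t x = x) /\
  (forall t tau s x, s <= tau -> tau <= t -> S t tau (S tau s x) = S t s x) /\
  (forall t s x eps, s <= t -> 0 < eps ->
     exists delta, 0 < delta /\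
       forall t' s' x', s' <= t' -> Rabs (t' - t) < delta -> Rabs (s' - s) < delta ->
         norm (minus x' x) < delta -> norm (minus (S t' s' x') (S t s x)) < eps).

Definition global_solution (S : R -> R -> X -> X) (xi : R -> X) : Prop :=
  forall t s, s <= t -> S t s (xi s) = xi t.

Definition bounded_fun (phi : R -> X) : Prop :=
  exists M, forall t, norm (phi t) <= M.

Definition bounded_projection (P : X -> X) : Prop :=
  bounded_linear P /\ forall x, P (P x) = P x.

(* Condition (ii): S(t,s) maps R(Q s) isomorphically onto R(Q t)
   (t >= s); its inverse R(Q t) -> R(Q s) is denoted S(s,t), i.e. it is the
   value of S s t on R(Q t). *)
Definition nonuniform_exp_dichotomy (S : R -> R -> X -> X) (Q : R -> X -> X)
    (K : R -> R) (alpha : R) : Prop :=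
  (forall t, bounded_projection (Q t)) /\
  (forall t s x, s <= t -> Q t (S t s x) = S t s (Q s x)) /\
  (forall t s, s <= t ->
     (forall x, S s t (S t s (Q s x)) = Q s x) /\
     (forall y, Q s (S s t (Q t y)) = S s t (Q t y)) /\
     (forall y, S t s (S s t (Q t y)) = Q t y)) /\
  (forall s, continuous K s) /\ (forall s, 1 <= K s) /\
  (exists D nu, 1 <= D /\ 0 <= nu /\ forall s, K s <= D * exp (nu * Rabs s)) /\
  0 < alpha /\
  (forall t s x, s <= t ->
     norm (S t s (minus x (Q s x))) <= K s * exp (- alpha * (t - s)) * norm x) /\
  (forall t s x, t < s ->
     norm (S t s (Q s x)) <= K s * exp (alpha * (t - s)) * norm x).

Definition green (L : R -> R -> X -> X) (Q : R -> X -> X) (t s : R) (x : X) : X :=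
  if Rle_dec s t then L t s (minus x (Q s x)) else opp (L t s (Q s x)).

Definition mild_process (T : R -> R -> X -> X) (f : R -> X -> X)
    (Sf : R -> R -> X -> X) : Prop :=
  forall s ys,
    (forall t, s <= t ->
       is_RInt (fun tau => T t tau (f tau (Sf tau s ys))) s t
               (minus (Sf t s ys) (T t s ys))) /\
    (forall t eps, s <= t -> 0 < eps -> exists delta, 0 < delta /\
       forall t', s <= t' -> Rabs (t' - t) < delta ->
         norm (minus (Sf t' s ys) (Sf t s ys)) < eps).

(* L is the linearized process of Sf along xi:
   L(t,s) = T(t,s) + \int_s^t T(t,tau) D_x f(tau, xi tau) L(tau,s) dtau
   (strongly, i.e. applied to every x). *)
Definition linearized_eq (T : R -> R -> X -> X) (Df : R -> X -> X -> X)
    (xi : R -> X) (L : R -> R -> X -> X) : Prop :=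
  forall t s x, s <= t ->
    is_RInt (fun tau => T t tau (Df tau (xi tau) (L tau s x))) s t
            (minus (L t s x) (T t s x)).

End Defs.

From Stdlib Require Import Reals Lra Classical.
From Coquelicot Require Import Coquelicot.
Open Scope R_scope.

(* The key identity is a variation of constants formula along the
   linearization: a global solution phi of S_f satisfies, for a <= b,
     phi(b) = L(b, a) phi(a) + \int_a^b L(b, tau) g_phi(tau) dtau,
   with forcing term g_phi(tau) = f(tau, phi tau) - D_x f(tau, xi tau) phi(tau).
   Since L(b, .) is only given for arguments <= b, it is obtained by showing
   that s |-> L(b, s) phi(s) - \int_a^s L(b, tau) g_phi(tau) dtau is right
   continuous with vanishing left difference quotients, hence constant.
   Splitting this formula with the dichotomy projections gives the Green
   representation of phi(t) on every window [a, b] up to two tails, which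
   vanish as a -> -oo, b -> +oo for bounded phi because alpha > nu: this is
   part (a).  For part (b), subtracting the representations of phi and xi
   and integrating the Green bound D e^{nu|tau|} e^{-alpha|t - tau|} against
   the remainder estimate rho shows that sup |phi - xi| is halved whenever it
   is small, so it is zero. *)

(* Closes goals [m <= x] where m is a nested Rmin, by naming each minimum
   together with its two defining inequalities. *)
Ltac solve_Rmin :=
  repeat match goal with
  | |- context [Rmin ?a ?b] =>
      let r := fresh "r" in
      pose proof (Rmin_l a b); pose proof (Rmin_r a b); set (r := Rmin a b) in *
  | H : context [Rmin ?a ?b] |- _ =>
      let r := fresh "r" in
      pose proof (Rmin_l a b); pose proof (Rmin_r a b); set (r := Rmin a b) in *
  end; lra.

Lemma Rmin_Lipschitz x y b : Rabs (Rmin x b - Rmin y b) <= Rabs (x - y).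
Proof.
  unfold Rmin. destruct (Rle_dec x b), (Rle_dec y b);
  unfold Rabs; repeat destruct Rcase_abs; lra.
Qed.

Section NormedModuleFacts.
Context {V : NormedModule R_AbsRing}.

Lemma minus_minus_comm (A B C E : V) :
  minus (minus A B) (minus C E) = minus (minus A C) (minus B E).
Proof.
  unfold minus. rewrite (@opp_plus V C), (@opp_plus V B), !(@opp_opp V).
  rewrite <- !plus_assoc. f_equal. rewrite !plus_assoc. f_equal. apply plus_comm.
Qed.

(* [minus_trans] at the level of normed modules, so that the resulting sums
   carry the normed-module structure expected by [norm_triangle]. *)
Lemma minus_split (b a c : V) : minus a c = plus (minus a b) (minus b c).
Proof. apply minus_trans. Qed.

Lemma minus_minus_cancel (p q r : V) : minus (minus p q) (minus r q) = minus p r.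
Proof. rewrite minus_minus_comm, minus_eq_zero. apply minus_zero_r. Qed.

Lemma minus_plus_cancel (u v : V) : plus (minus u v) v = u.
Proof. unfold minus. rewrite <- plus_assoc, plus_opp_l. apply plus_zero_r. Qed.

Lemma plus_minus_cancel_l (u v : V) : minus (plus u v) u = v.
Proof. rewrite (plus_comm u v). apply (plus_reg_r u). apply minus_plus_cancel. Qed.

Lemma minus_minus_r (p q : V) : minus p (minus p q) = q.
Proof.
  apply (plus_reg_r (minus p q)). rewrite minus_plus_cancel, plus_comm.
  symmetry. apply minus_plus_cancel.
Qed.

Lemma tails_split (p q e1 e2 : V) :
  plus (minus (minus p q) e1) (opp (minus e2 q)) = minus (minus p e1) e2.
Proof.
  rewrite (@opp_minus V).
  replace (minus (minus p q) e1) with (minus (minus p e1) q).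
  - symmetry. apply minus_split.
  - unfold minus. rewrite <- !plus_assoc. f_equal. apply plus_comm.
Qed.

Lemma tails_defect (p e1 e2 : V) : minus (minus (minus p e1) e2) p = opp (plus e1 e2).
Proof.
  rewrite (@opp_plus V). unfold minus. rewrite <- !plus_assoc, plus_comm, <- !plus_assoc.
  rewrite plus_opp_l, plus_zero_r. reflexivity.
Qed.

Lemma eq_of_minus_zero (a b : V) : minus a b = zero -> a = b.
Proof. intro H. apply (plus_reg_r (opp b)). rewrite plus_opp_r. exact H. Qed.

Lemma norm_minus_self (a : V) : norm (minus a a) = 0.
Proof. rewrite minus_eq_zero. apply (@norm_zero R_AbsRing V). Qed.

Lemma eq_of_norm_small (a b : V) :
  (forall e, 0 < e -> norm (minus a b) <= e) -> a = b.
Proof.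
  intro H. apply eq_of_minus_zero, norm_eq_zero.
  destruct (Rle_lt_or_eq_dec _ _ (norm_ge_0 (minus a b))) as [h|h]; [|auto].
  specialize (H (norm (minus a b) / 2) ltac:(lra)). lra.
Qed.

Lemma norm_le_plus_minus (u v : V) : norm u <= norm v + norm (minus u v).
Proof.
  pose proof (norm_triangle v (minus u v)) as H.
  rewrite plus_comm, minus_plus_cancel in H. exact H.
Qed.

Lemma norm_minus_minus_le (A B C E : V) :
  norm (minus (minus A B) (minus C E)) <= norm (minus A C) + norm (minus B E).
Proof.
  rewrite minus_minus_comm. unfold minus at 1.
  eapply Rle_trans; [apply norm_triangle|]. rewrite norm_opp. lra.
Qed.

Lemma norm_minus_via (p q c : V) : norm (minus p q) <= norm (minus p c) + norm (minus q c).
Proof.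
  rewrite <- (minus_minus_cancel p c q). unfold minus at 1.
  eapply Rle_trans; [apply norm_triangle|]. rewrite norm_opp. lra.
Qed.

Lemma continuous_of_eps (h : R -> V) t0 :
  (forall e, 0 < e -> exists d, 0 < d /\
     forall t, Rabs (t - t0) < d -> norm (minus (h t) (h t0)) < e) ->
  continuous h t0.
Proof.
  intro H. apply (proj2 (filterlim_locally_ball_norm _ _)).
  intros eps. destruct (H eps (cond_pos eps)) as [d [hd Hd]].
  exists (mkposreal d hd). intros y hy. apply Hd. exact hy.
Qed.

Lemma eps_of_continuous (h : R -> V) t0 : continuous h t0 ->
  forall e, 0 < e -> exists d, 0 < d /\
     forall t, Rabs (t - t0) < d -> norm (minus (h t) (h t0)) < e.
Proof.
  intros H e he.
  destruct (proj1 (filterlim_locally_ball_norm _ _) H (mkposreal e he)) as [d Hd].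
  exists d. split; [apply cond_pos|]. intros t ht. apply (Hd t ht).
Qed.

End NormedModuleFacts.

(* Constancy criterion, proved by a supremum argument run from the right
   end b: for every slope e > 0, F b - F a is at most e (b - a). *)
Section ZeroLeftDerivative.
Context {V : NormedModule R_AbsRing} (F : R -> V) (a b : R).
Hypothesis hab : a <= b.
Hypothesis right_cont : forall y, a <= y < b -> forall e, 0 < e -> exists d, 0 < d /\
  forall y', y < y' < y + d -> norm (minus (F y') (F y)) < e.
Hypothesis left_deriv_zero : forall s, a < s <= b -> forall e, 0 < e -> exists d, 0 < d /\
  forall k, 0 < k < d -> a <= s - k -> norm (minus (F s) (F (s - k))) <= e * k.

Variable e : R.
Hypothesis he : 0 < e.

Definition slope_ok (d : R) : Prop :=
  0 <= d <= b - a /\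
  forall y, b - d <= y <= b -> norm (minus (F b) (F y)) <= e * (b - y).

(* Right continuity makes the slope bound pass to the left endpoint. *)
Lemma slope_bound_closed m : 0 <= m <= b - a ->
  (forall y, b - m < y <= b -> norm (minus (F b) (F y)) <= e * (b - y)) ->
  slope_ok m.
Proof.
  intros hm Hin. split; [exact hm|]. intros y hy.
  destruct (Req_dec y (b - m)) as [->|ne]; [|apply Hin; lra].
  destruct (Req_dec m 0) as [z|nz].
  { rewrite z, Rminus_0_r, norm_minus_self. lra. }
  apply Rnot_lt_le. intro hgt.
  set (gap := norm (minus (F b) (F (b - m))) - e * (b - (b - m))).
  destruct (right_cont (b - m) ltac:(lra) (gap / 2) ltac:(unfold gap; lra)) as [d [hd Hd]].
  set (y' := b - m + Rmin d m / 2).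
  assert (hmin : 0 < Rmin d m) by (apply Rmin_pos; lra).
  pose proof (Rmin_l d m). pose proof (Rmin_r d m).
  pose proof (Hin y' ltac:(unfold y'; lra)) as h1.
  pose proof (Hd y' ltac:(unfold y'; lra)) as h2.
  pose proof (norm_triangle (minus (F b) (F y')) (minus (F y') (F (b - m)))) as h3.
  rewrite <- (minus_split (F y')) in h3.
  assert (e * (b - y') <= e * (b - (b - m))) by (apply Rmult_le_compat_l; unfold y'; lra).
  unfold gap in *. lra.
Qed.

Lemma slope_ok_max : exists m, slope_ok m /\ forall d, slope_ok d -> d <= m.
Proof.
  assert (H0 : slope_ok 0).
  { split; [lra|]. intros y hy. replace y with b by lra. rewrite norm_minus_self. lra. }
  destruct (completeness slope_ok) as [m [Hub Hlub]].
  { exists (b - a). intros d [[_ h] _]. exact h. }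
  { exists 0. exact H0. }
  exists m. split; [|exact Hub].
  assert (hm : 0 <= m <= b - a).
  { split; [apply Hub, H0|]. apply Hlub. intros d [[_ h] _]. exact h. }
  apply (slope_bound_closed m hm). intros y hy.
  destruct (classic (exists d, slope_ok d /\ b - y < d)) as [[d [[_ Hd] hd]]|hn].
  - apply Hd. lra.
  - assert (m <= b - y); [|lra].
    apply Hlub. intros d Hd. apply Rnot_lt_le. intro hd. apply hn. exists d. auto.
Qed.

(* The vanishing left difference quotient lets an admissible length grow. *)
Lemma slope_ok_extend m : slope_ok m -> m < b - a -> exists k, 0 < k /\ slope_ok (m + k).
Proof.
  intros [hm Hm] hlt.
  destruct (left_deriv_zero (b - m) ltac:(lra) e he) as [d [hd Hd]].
  assert (hk : 0 < Rmin (d / 2) (b - a - m)) by (apply Rmin_pos; lra).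
  pose proof (Rmin_l (d / 2) (b - a - m)). pose proof (Rmin_r (d / 2) (b - a - m)).
  set (k := Rmin (d / 2) (b - a - m)) in *.
  exists k. split; [exact hk|]. split; [lra|]. intros y hy.
  destruct (Rle_lt_dec (b - m) y) as [h|h]; [apply Hm; lra|].
  pose proof (Hd (b - m - y) ltac:(lra) ltac:(lra)) as Hy.
  replace (b - m - (b - m - y)) with y in Hy by ring.
  rewrite (minus_split (F (b - m))).
  eapply Rle_trans; [apply norm_triangle|].
  pose proof (Hm (b - m) ltac:(lra)).
  replace (e * (b - y)) with (e * (b - (b - m)) + e * (b - m - y)) by ring. lra.
Qed.

Lemma slope_bound : norm (minus (F b) (F a)) <= e * (b - a).
Proof.
  destruct slope_ok_max as [m [[hm Hm] Hmax]].
  destruct (Rle_lt_dec (b - a) m) as [h|h].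
  - apply Hm. lra.
  - destruct (slope_ok_extend m (conj hm Hm) h) as [k [hk Hk]].
    pose proof (Hmax _ Hk). lra.
Qed.

End ZeroLeftDerivative.

(* This is how the variation of constants
   formula is obtained below, where only one-sided information is available. *)
Lemma constant_of_zero_left_derivative {V : NormedModule R_AbsRing} (F : R -> V) a b :
  a <= b ->
  (forall y, a <= y < b -> forall e, 0 < e -> exists d, 0 < d /\
     forall y', y < y' < y + d -> norm (minus (F y') (F y)) < e) ->
  (forall s, a < s <= b -> forall e, 0 < e -> exists d, 0 < d /\
     forall k, 0 < k < d -> a <= s - k -> norm (minus (F s) (F (s - k))) <= e * k) ->
  F a = F b.
Proof.
  intros hab RC LD. symmetry. apply eq_of_norm_small. intros e he.
  set (e' := e / (b - a + 1)).
  assert (he' : 0 < e') by (unfold e'; apply Rdiv_lt_0_compat; lra).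
  eapply Rle_trans; [exact (slope_bound F a b hab RC LD e' he')|].
  apply Rle_trans with (e' * (b - a + 1)); [apply Rmult_le_compat_l; lra|].
  right. unfold e'. field. lra.
Qed.

Section LinearIntegral.
Context {U W : NormedModule R_AbsRing}.

Lemma Riemann_sum_linear (l : U -> W) (Hl : is_linear l) (g : R -> U) ptd :
  l (Riemann_sum g ptd) = Riemann_sum (fun x => l (g x)) ptd.
Proof.
  induction ptd using SF_cons_ind.
  - apply (linear_zero l Hl).
  - rewrite !Riemann_sum_cons, (linear_plus l Hl), (linear_scal l Hl), IHptd.
    reflexivity.
Qed.

Lemma is_RInt_linear (l : U -> W) (Hl : is_linear l) (g : R -> U) a b I :
  is_RInt g a b I -> is_RInt (fun x => l (g x)) a b (l I).
Proof.
  intro H. unfold is_RInt in *.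
  eapply filterlim_ext; [|eapply filterlim_comp; [exact H|apply (linear_cont l I Hl)]].
  intro ptd. simpl. rewrite (linear_scal l Hl), (Riemann_sum_linear l Hl). reflexivity.
Qed.

End LinearIntegral.

Lemma RInt_near_constant {V : NormedModule R_AbsRing} (w : R -> V) a b I c e :
  a <= b -> is_RInt w a b I ->
  (forall t, a <= t <= b -> norm (minus (w t) c) <= e) ->
  norm (minus I (scal (b - a) c)) <= e * (b - a).
Proof.
  intros hab HI Hb.
  pose proof (is_RInt_minus _ _ _ _ _ _ HI (is_RInt_const a b c)) as H.
  eapply Rle_trans; [apply (norm_RInt_le _ (fun _ => e) a b _ _ hab Hb H (is_RInt_const a b e))|].
  right. unfold scal; simpl. unfold mult; simpl. ring.
Qed.

Lemma exp_vanishes_at_minus_infty C c eps : 0 < c -> 0 < eps -> 0 <= C ->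
  exists A, forall a, a < A -> C * exp (c * a) < eps.
Proof.
  intros hc he hC.
  exists (ln (eps / (C + 1)) / c). intros a ha.
  assert (h1 : c * a < ln (eps / (C + 1))).
  { apply Rmult_lt_compat_l with (r := c) in ha; [|lra].
    replace (c * (ln (eps / (C + 1)) / c)) with (ln (eps / (C + 1))) in ha by (field; lra).
    exact ha. }
  apply exp_increasing in h1. rewrite exp_ln in h1 by (apply Rdiv_lt_0_compat; lra).
  pose proof (exp_pos (c * a)).
  apply Rle_lt_trans with ((C + 1) * exp (c * a)); [nra|].
  apply Rlt_le_trans with ((C + 1) * (eps / (C + 1))); [apply Rmult_lt_compat_l; lra|].
  right. field. lra.
Qed.

(* The nonuniform growth e^{nu|s|} is beaten by the dichotomy rate alpha > nu:
   the weights of the two tails of the Green representation vanish. *)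
Section TailWeights.
Variables nu alpha : R.
Hypothesis Hna : nu < alpha.

Lemma left_weight_vanishes t eps : 0 < eps ->
  exists A, forall a, a < A -> exp (nu * Rabs a) * exp (- alpha * (t - a)) < eps.
Proof.
  intro he.
  destruct (exp_vanishes_at_minus_infty (exp (- alpha * t)) (alpha - nu) eps
              ltac:(lra) he (Rlt_le _ _ (exp_pos _))) as [A HA].
  exists (Rmin A 0). intros a ha.
  pose proof (Rmin_l A 0). pose proof (Rmin_r A 0).
  rewrite Rabs_left by lra. rewrite <- exp_plus.
  replace (nu * - a + - alpha * (t - a)) with (- alpha * t + (alpha - nu) * a) by ring.
  rewrite exp_plus. apply HA. lra.
Qed.

Lemma right_weight_vanishes t eps : 0 < eps ->
  exists B, forall b, B < b -> exp (nu * Rabs b) * exp (alpha * (t - b)) < eps.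
Proof.
  intro he.
  destruct (exp_vanishes_at_minus_infty (exp (alpha * t)) (alpha - nu) eps
              ltac:(lra) he (Rlt_le _ _ (exp_pos _))) as [A HA].
  exists (Rmax (- A) 0). intros b hb.
  pose proof (Rmax_l (- A) 0). pose proof (Rmax_r (- A) 0).
  rewrite Rabs_right by lra. rewrite <- exp_plus.
  replace (nu * b + alpha * (t - b)) with (alpha * t + (alpha - nu) * - b) by ring.
  rewrite exp_plus. apply HA. lra.
Qed.

End TailWeights.

Section ExponentialKernel.
Variables alpha t : R.
Hypothesis halpha : 0 < alpha.

Definition exp_kernel (tau : R) : R := exp (- alpha * Rabs (t - tau)).

Lemma exp_kernel_integral a b : a <= t <= b ->
  is_RInt exp_kernel a b ((2 - exp (- alpha * (t - a)) - exp (- alpha * (b - t))) / alpha).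
Proof.
  intros h.
  assert (Hl : is_RInt exp_kernel a t
     (minus (exp (- alpha * (t - t)) / alpha) (exp (- alpha * (t - a)) / alpha))).
  { apply (is_RInt_ext (fun tau => exp (- alpha * (t - tau)))).
    { intros x hx. rewrite Rmin_left in hx by lra. rewrite Rmax_right in hx by lra.
      unfold exp_kernel. rewrite Rabs_right by lra. reflexivity. }
    apply (is_RInt_derive (fun tau => exp (- alpha * (t - tau)) / alpha)).
    - intros x _. auto_derive; [exact I|]. replace (t + - x) with (t - x) by ring.
      field. lra.
    - intros x _. apply continuity_pt_filterlim. reg. }
  assert (Hr : is_RInt exp_kernel t b
     (minus (- exp (- alpha * (b - t)) / alpha) (- exp (- alpha * (t - t)) / alpha))).
  { apply (is_RInt_ext (fun tau => exp (- alpha * (tau - t)))).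
    { intros x hx. rewrite Rmin_left in hx by lra. rewrite Rmax_right in hx by lra.
      unfold exp_kernel. rewrite Rabs_left by lra. f_equal. ring. }
    apply (is_RInt_derive (fun tau => - exp (- alpha * (tau - t)) / alpha)).
    - intros x _. auto_derive; [exact I|]. replace (x + - t) with (x - t) by ring.
      field. lra.
    - intros x _. apply continuity_pt_filterlim. reg. }
  pose proof (is_RInt_Chasles _ _ _ _ _ _ Hl Hr) as H.
  replace ((2 - exp (- alpha * (t - a)) - exp (- alpha * (b - t))) / alpha) with
    (plus (minus (exp (- alpha * (t - t)) / alpha) (exp (- alpha * (t - a)) / alpha))
          (minus (- exp (- alpha * (b - t)) / alpha) (- exp (- alpha * (t - t)) / alpha)));
    [exact H|].
  unfold minus; unfold plus, opp; simpl. replace (t - t) with 0 by ring.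
  rewrite Rmult_0_r, exp_0. field. lra.
Qed.

Lemma exp_kernel_improper_integral :
  is_RInt_gen exp_kernel (Rbar_locally m_infty) (Rbar_locally p_infty) (2 / alpha).
Proof.
  unfold is_RInt_gen. apply filterlimi_locally. intros eps.
  pose proof (cond_pos eps) as heps.
  assert (hae : 0 < alpha * eps / 2) by (pose proof (Rmult_lt_0_compat _ _ halpha heps); lra).
  destruct (left_weight_vanishes 0 alpha ltac:(lra) t (alpha * eps / 2) hae) as [A HA].
  destruct (right_weight_vanishes 0 alpha ltac:(lra) t (alpha * eps / 2) hae) as [B HB].
  apply Filter_prod with (fun a => a < Rmin A t) (fun b => Rmax B t < b).
  - exists (Rmin A t). intros; assumption.
  - exists (Rmax B t). intros; assumption.
  - intros a b ha hb. simpl.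
    pose proof (Rmin_l A t). pose proof (Rmin_r A t).
    pose proof (Rmax_l B t). pose proof (Rmax_r B t).
    eexists. split; [apply exp_kernel_integral; lra|].
    apply norm_compat1. simpl.
    pose proof (HA a ltac:(lra)) as h1. pose proof (HB b ltac:(lra)) as h2.
    rewrite Rmult_0_l, exp_0, Rmult_1_l in h1, h2.
    replace (alpha * (t - b)) with (- alpha * (b - t)) in h2 by ring.
    pose proof (exp_pos (- alpha * (t - a))). pose proof (exp_pos (- alpha * (b - t))).
    unfold minus, plus, opp, norm; simpl. unfold abs; simpl.
    replace ((2 - exp (- alpha * (t - a)) - exp (- alpha * (b - t))) / alpha + - (2 / alpha))
      with (- ((exp (- alpha * (t - a)) + exp (- alpha * (b - t))) / alpha)) by (field; lra).
    rewrite Rabs_Ropp, Rabs_right by (apply Rle_ge, Rlt_le, Rdiv_lt_0_compat; lra).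
    apply Rlt_le_trans with ((alpha * eps / 2 + alpha * eps / 2) / alpha).
    + apply Rmult_lt_compat_r; [apply Rinv_0_lt_compat; lra|lra].
    + right. field. lra.
Qed.

End ExponentialKernel.

Section VariationOfConstants.
Context {X : CompleteNormedModule R_AbsRing}
  (T : R -> R -> X -> X) (f : R -> X -> X) (Df : R -> X -> X -> X)
  (Sf : R -> R -> X -> X) (xi : R -> X) (L : R -> R -> X -> X).
Hypotheses (HT : lin_evolution_process T)
  (Hfc : forall t x, continuous (fun p : R * X => f (fst p) (snd p)) (t, x))
  (HDlin : forall t x, is_linear (Df t x))
  (HDc : forall t x eps, 0 < eps -> exists delta, 0 < delta /\
     forall t' x', Rabs (t' - t) < delta -> norm (minus x' x) < delta ->
       forall h, norm (minus (Df t' x' h) (Df t x h)) <= eps * norm h)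
  (Hmild : mild_process T f Sf) (Hxi : global_solution Sf xi)
  (HL : lin_evolution_process L) (HLeq : linearized_eq T Df xi L).

Definition forcing (phi : R -> X) (tau : R) : X :=
  minus (f tau (phi tau)) (Df tau (xi tau) (phi tau)).

Lemma f_continuous_eps t x e : 0 < e -> exists d, 0 < d /\
  forall tau y, Rabs (tau - t) < d -> norm (minus y x) < d ->
    norm (minus (f tau y) (f t x)) < e.
Proof.
  intro he.
  destruct (proj1 (@filterlim_locally_ball_norm R_AbsRing _ X _
    (@filter_filter _ _ (locally_filter (t, x))) _ _) (Hfc t x) (mkposreal e he)) as [d Hd].
  exists d. split; [apply cond_pos|]. intros tau y h1 h2.
  apply (Hd (tau, y)). split; [exact h1|]. apply norm_compat1. exact h2.
Qed.

Lemma global_solution_continuous (phi : R -> X) : global_solution Sf phi ->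
  forall s e, 0 < e -> exists d, 0 < d /\
    forall tau, Rabs (tau - s) < d -> norm (minus (phi tau) (phi s)) < e.
Proof.
  intros Hphi s e he.
  destruct (proj2 (Hmild (s - 1) (phi (s - 1))) s e ltac:(lra) he) as [d [hd Hd]].
  exists (Rmin d 1). split; [apply Rmin_pos; lra|]. intros tau htau.
  pose proof (Rmin_l d 1). pose proof (Rmin_r d 1).
  assert (s - 1 <= tau) by (apply Rabs_def2 in htau; lra).
  rewrite <- (Hphi tau (s - 1)), <- (Hphi s (s - 1)) by lra.
  apply Hd; lra.
Qed.

Lemma perturbed_forcing_near (phi : R -> X) (Hphi : global_solution Sf phi) sigma e :
  0 < e -> exists d, 0 < d /\ forall tau u, Rabs (tau - sigma) < d ->
    norm (minus u (phi sigma)) < d ->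
    norm (minus (minus (f tau (phi tau)) (Df tau (xi tau) u)) (forcing phi sigma)) < e.
Proof.
  intro he.
  destruct (f_continuous_eps sigma (phi sigma) (e / 2) ltac:(lra)) as [d1 [hd1 Hd1]].
  destruct (global_solution_continuous phi Hphi sigma d1 hd1) as [d2 [hd2 Hd2]].
  destruct (linear_norm _ (HDlin sigma (xi sigma))) as [M [hM HM]].
  pose proof (norm_ge_0 (phi sigma)) as hp.
  set (eta := e / (8 * (norm (phi sigma) + 1))).
  assert (heta : 0 < eta) by (unfold eta; apply Rdiv_lt_0_compat; lra).
  destruct (HDc sigma (xi sigma) eta heta) as [d3 [hd3 Hd3]].
  destruct (global_solution_continuous xi Hxi sigma d3 hd3) as [d4 [hd4 Hd4]].
  set (d := Rmin (Rmin (Rmin d1 d2) (Rmin d3 d4)) (Rmin 1 (e / (8 * M)))).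
  assert (hd : 0 < d).
  { unfold d. repeat apply Rmin_pos; try lra. apply Rdiv_lt_0_compat; lra. }
  assert (hdd : d <= d1 /\ d <= d2 /\ d <= d3 /\ d <= d4 /\ d <= 1 /\ d <= e / (8 * M))
    by (clear -hd; unfold d in *; solve_Rmin).
  destruct hdd as (hd1' & hd2' & hd3' & hd4' & hd5' & hd6').
  exists d. split; [exact hd|]. intros tau u htau hu. unfold forcing.
  eapply Rle_lt_trans; [apply (@norm_minus_minus_le X)|].
  assert (hf : norm (minus (f tau (phi tau)) (f sigma (phi sigma))) < e / 2).
  { apply Hd1; [lra|]. apply Hd2. lra. }
  assert (hnu : norm u <= norm (phi sigma) + 1).
  { eapply Rle_trans; [apply (norm_le_plus_minus u (phi sigma))|].
    apply Rplus_le_compat_l, Rlt_le, Rlt_le_trans with d; [exact hu|lra]. }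
  assert (hmove : norm (minus (Df tau (xi tau) u) (Df sigma (xi sigma) u)) <= e / 8).
  { eapply Rle_trans; [apply (Hd3 tau (xi tau)); [lra|apply Hd4; lra]|].
    apply Rle_trans with (eta * (norm (phi sigma) + 1)); [apply Rmult_le_compat_l; lra|].
    right. unfold eta. field. lra. }
  assert (hperturb : norm (minus (Df sigma (xi sigma) u) (Df sigma (xi sigma) (phi sigma)))
                     <= e / 8).
  { rewrite <- (linear_minus _ _ _ (HDlin sigma (xi sigma))).
    eapply Rle_trans; [apply HM|].
    apply Rle_trans with (M * (e / (8 * M))).
    { apply Rmult_le_compat_l; [lra|]. apply Rlt_le, Rlt_le_trans with d; [exact hu|lra]. }
    right. field. lra. }
  apply Rlt_le_trans with (e / 2 + (e / 8 + e / 8)); [|lra].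
  apply Rplus_lt_le_compat; [exact hf|].
  rewrite (minus_split (Df sigma (xi sigma) u)).
  eapply Rle_trans; [apply norm_triangle|]. apply Rplus_le_compat; assumption.
Qed.

Lemma forcing_continuous (phi : R -> X) (Hphi : global_solution Sf phi) sigma e :
  0 < e -> exists d, 0 < d /\ forall tau, Rabs (tau - sigma) < d ->
    norm (minus (forcing phi tau) (forcing phi sigma)) < e.
Proof.
  intro he.
  destruct (perturbed_forcing_near phi Hphi sigma e he) as [d1 [hd1 Hd1]].
  destruct (global_solution_continuous phi Hphi sigma d1 hd1) as [d2 [hd2 Hd2]].
  exists (Rmin d1 d2). split; [apply Rmin_pos; lra|]. intros tau htau.
  pose proof (Rmin_l d1 d2). pose proof (Rmin_r d1 d2).
  apply Hd1; [lra|]. apply Hd2. lra.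
Qed.

(* Comparing the mild equation for phi with the linearized equation started
   at phi s: the increment over [s, sigma] is driven by f - D_x f(xi) L phi. *)
Lemma mild_increment (phi : R -> X) (Hphi : global_solution Sf phi) s sigma : s <= sigma ->
  is_RInt (fun tau => T sigma tau
             (minus (f tau (phi tau)) (Df tau (xi tau) (L tau s (phi s)))))
    s sigma (minus (phi sigma) (L sigma s (phi s))).
Proof.
  intro hs.
  pose proof (proj1 (Hmild s (phi s)) sigma hs) as Hphi_eq.
  rewrite (Hphi sigma s hs) in Hphi_eq.
  pose proof (is_RInt_minus _ _ _ _ _ _ Hphi_eq (HLeq sigma s (phi s) hs)) as H.
  rewrite (@minus_minus_cancel X) in H.
  eapply is_RInt_ext; [|exact H].
  intros x hx. rewrite Rmin_left in hx by lra. rewrite Rmax_right in hx by lra.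
  simpl. rewrite (Hphi x s) by lra.
  destruct HT as [Tlin _]. symmetry. apply (@linear_minus R_AbsRing X X), Tlin. lra.
Qed.

Lemma increment_integrand_near (phi : R -> X) (Hphi : global_solution Sf phi) sigma e :
  0 < e -> exists d, 0 < d /\ forall k tau, 0 < k < d -> sigma - k <= tau <= sigma ->
    norm (minus (T sigma tau (minus (f tau (phi tau))
                   (Df tau (xi tau) (L tau (sigma - k) (phi (sigma - k))))))
                (forcing phi sigma)) <= e.
Proof.
  intro he.
  destruct HT as [_ [Tid [_ Tcont]]].
  destruct HL as [_ [Lid [_ Lcont]]].
  destruct (Tcont sigma sigma (forcing phi sigma) e (Rle_refl _) he) as [d1 [hd1 Hd1]].
  rewrite Tid in Hd1.
  destruct (perturbed_forcing_near phi Hphi sigma d1 hd1) as [d2 [hd2 Hd2]].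
  destruct (Lcont sigma sigma (phi sigma) d2 (Rle_refl _) hd2) as [d3 [hd3 Hd3]].
  rewrite Lid in Hd3.
  destruct (global_solution_continuous phi Hphi sigma d3 hd3) as [d4 [hd4 Hd4]].
  set (d := Rmin (Rmin d1 d2) (Rmin d3 d4)).
  assert (hd : 0 < d) by (unfold d; repeat apply Rmin_pos; lra).
  assert (hdd : d <= d1 /\ d <= d2 /\ d <= d3 /\ d <= d4)
    by (clear -hd; unfold d in *; solve_Rmin).
  destruct hdd as (hd1' & hd2' & hd3' & hd4').
  exists d. split; [exact hd|]. intros k tau hk htau.
  assert (Hu : norm (minus (L tau (sigma - k) (phi (sigma - k))) (phi sigma)) < d2).
  { apply Hd3; [lra|apply Rabs_def1; lra|apply Rabs_def1; lra|].
    apply Hd4. apply Rabs_def1; lra. }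
  apply Rlt_le, Hd1; [lra|rewrite Rminus_diag, Rabs_R0; lra|apply Rabs_def1; lra|].
  apply Hd2; [apply Rabs_def1; lra|exact Hu].
Qed.

(* The forcing term transported to time b by the linearized process; the
   truncation at b makes it a continuous function on the whole line. *)
Definition propagated_forcing (phi : R -> X) (b tau : R) : X :=
  L b (Rmin tau b) (forcing phi (Rmin tau b)).

Lemma propagated_forcing_continuous (phi : R -> X) (Hphi : global_solution Sf phi) b t0 :
  continuous (propagated_forcing phi b) t0.
Proof.
  apply (@continuous_of_eps X). intros e he.
  destruct HL as [_ [_ [_ Lcont]]].
  destruct (Lcont b (Rmin t0 b) (forcing phi (Rmin t0 b)) e (Rmin_r _ _) he)
    as [d1 [hd1 Hd1]].
  destruct (forcing_continuous phi Hphi (Rmin t0 b) d1 hd1) as [d2 [hd2 Hd2]].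
  exists (Rmin d1 d2). split; [apply Rmin_pos; lra|]. intros t ht.
  pose proof (Rmin_l d1 d2). pose proof (Rmin_r d1 d2). pose proof (Rmin_Lipschitz t t0 b).
  apply Hd1; [apply Rmin_r|rewrite Rminus_diag, Rabs_R0; lra|lra|].
  apply Hd2. lra.
Qed.

Lemma propagated_forcing_integrable (phi : R -> X) (Hphi : global_solution Sf phi) b x y :
  ex_RInt (propagated_forcing phi b) x y.
Proof.
  apply ex_RInt_continuous. intros z _. apply propagated_forcing_continuous, Hphi.
Qed.

(* L(b, s) phi(s) - \int_a^s L(b, tau) forcing(tau) dtau, shown to be constant
   in s in order to obtain the variation of constants formula. *)
Definition vc_gap (phi : R -> X) (a b s : R) : X :=
  minus (L b s (phi s)) (RInt (propagated_forcing phi b) a s).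

Lemma vc_gap_right_continuous (phi : R -> X) (Hphi : global_solution Sf phi) a b y :
  y < b -> forall e, 0 < e -> exists d, 0 < d /\
    forall y', y < y' < y + d -> norm (minus (vc_gap phi a b y') (vc_gap phi a b y)) < e.
Proof.
  intros hy e he.
  destruct HL as [_ [_ [_ Lcont]]].
  destruct (Lcont b y (phi y) (e / 2) ltac:(lra) ltac:(lra)) as [d1 [hd1 Hd1]].
  destruct (global_solution_continuous phi Hphi y d1 hd1) as [d2 [hd2 Hd2]].
  assert (Hint : continuous (RInt (propagated_forcing phi b) a) y).
  { apply (@continuous_RInt_1 X (propagated_forcing phi b) a y). apply filter_forall. intro z.
    apply RInt_correct, propagated_forcing_integrable, Hphi. }
  destruct (@eps_of_continuous X _ y Hint (e / 2) ltac:(lra)) as [d3 [hd3 Hd3]].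
  set (d := Rmin (Rmin d1 d2) (Rmin d3 (b - y))).
  assert (hd : 0 < d) by (unfold d; repeat apply Rmin_pos; lra).
  assert (hdd : d <= d1 /\ d <= d2 /\ d <= d3 /\ d <= b - y)
    by (clear -hd; unfold d in *; solve_Rmin).
  destruct hdd as (hd1' & hd2' & hd3' & hd4').
  exists d. split; [exact hd|]. intros y' hy'.
  assert (hy'd : Rabs (y' - y) < d) by (apply Rabs_def1; lra).
  unfold vc_gap. eapply Rle_lt_trans; [apply (@norm_minus_minus_le X)|].
  apply Rlt_le_trans with (e / 2 + e / 2); [|lra].
  apply Rplus_lt_compat.
  - apply Hd1; [lra|rewrite Rminus_diag, Rabs_R0; lra|lra|]. apply Hd2. lra.
  - apply Hd3. lra.
Qed.

(* Left difference quotients of [vc_gap] vanish: both the propagated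
   increment of phi and the increment of the integral over [s - k, s] are
   k L(b, s) forcing(s) up to o(k). *)
Lemma vc_gap_left_derivative_zero (phi : R -> X) (Hphi : global_solution Sf phi) a b s :
  a < s <= b -> forall e, 0 < e -> exists d, 0 < d /\ forall k, 0 < k < d -> a <= s - k ->
    norm (minus (vc_gap phi a b s) (vc_gap phi a b (s - k))) <= e * k.
Proof.
  intros hs e he.
  destruct HL as [Llin [_ [Lcoc _]]].
  destruct (linear_norm _ (Llin b s ltac:(lra))) as [M [hM HM]].
  destruct (increment_integrand_near phi Hphi s (e / (2 * M))
              ltac:(apply Rdiv_lt_0_compat; lra)) as [d1 [hd1 Hd1]].
  destruct (@eps_of_continuous X _ s (propagated_forcing_continuous phi Hphi b s) (e / 2)
              ltac:(lra)) as [d2 [hd2 Hd2]].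
  exists (Rmin d1 d2). split; [apply Rmin_pos; lra|]. intros k hk hak.
  pose proof (Rmin_l d1 d2). pose proof (Rmin_r d1 d2).
  set (c := L b s (forcing phi s)).
  assert (Hincr : norm (minus (minus (L b s (phi s)) (L b (s - k) (phi (s - k)))) (scal k c))
                  <= e / 2 * k).
  { rewrite <- (Lcoc b s (s - k) (phi (s - k))) by lra.
    rewrite <- (linear_minus (L b s) _ _ (Llin b s ltac:(lra))).
    unfold c. rewrite <- (linear_scal _ (Llin b s ltac:(lra))).
    rewrite <- (linear_minus (L b s) _ _ (Llin b s ltac:(lra))).
    eapply Rle_trans; [apply HM|].
    pose proof (RInt_near_constant _ (s - k) s _ (forcing phi s) (e / (2 * M)) ltac:(lra)
                  (mild_increment phi Hphi (s - k) s ltac:(lra))) as HA.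
    replace (s - (s - k)) with k in HA by ring.
    apply Rle_trans with (M * (e / (2 * M) * k)).
    - apply Rmult_le_compat_l; [lra|]. apply HA. intros t ht. apply (Hd1 k t); lra.
    - right. field. lra. }
  assert (HI : norm (minus (minus (RInt (propagated_forcing phi b) a s)
                                  (RInt (propagated_forcing phi b) a (s - k))) (scal k c))
               <= e / 2 * k).
  { rewrite <- (RInt_Chasles (propagated_forcing phi b) a (s - k) s)
      by apply propagated_forcing_integrable, Hphi.
    rewrite (@plus_minus_cancel_l X).
    assert (Hc : propagated_forcing phi b s = c)
      by (unfold propagated_forcing, c; rewrite Rmin_left by lra; reflexivity).
    pose proof (RInt_near_constant (propagated_forcing phi b) (s - k) s _ c (e / 2) ltac:(lra)
      (RInt_correct _ _ _ (propagated_forcing_integrable phi Hphi b (s - k) s))) as HB.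
    replace (s - (s - k)) with k in HB by ring.
    apply HB. intros t ht. rewrite <- Hc. apply Rlt_le, Hd2. apply Rabs_def1; lra. }
  unfold vc_gap. rewrite (@minus_minus_comm X).
  replace (e * k) with (e / 2 * k + e / 2 * k) by field.
  eapply Rle_trans; [apply (@norm_minus_via X _ _ (scal k c))|].
  apply Rplus_le_compat; [exact Hincr|exact HI].
Qed.

Lemma variation_of_constants (phi : R -> X) (Hphi : global_solution Sf phi) a b : a <= b ->
  is_RInt (fun tau => L b tau (forcing phi tau)) a b (minus (phi b) (L b a (phi a))).
Proof.
  intro hab.
  pose proof (constant_of_zero_left_derivative (vc_gap phi a b) a b hab
    (fun y hy => vc_gap_right_continuous phi Hphi a b y (proj2 hy))
    (vc_gap_left_derivative_zero phi Hphi a b)) as Hconst.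
  destruct HL as [_ [Lid _]].
  unfold vc_gap in Hconst. rewrite RInt_point, Lid, (@minus_zero_r X) in Hconst.
  assert (HR : RInt (propagated_forcing phi b) a b = minus (phi b) (L b a (phi a))).
  { rewrite Hconst. symmetry. apply (@minus_minus_r X). }
  eapply is_RInt_ext; [|rewrite <- HR; apply RInt_correct, propagated_forcing_integrable, Hphi].
  intros x hx. rewrite Rmin_left in hx by lra. rewrite Rmax_right in hx by lra.
  unfold propagated_forcing. rewrite Rmin_left by lra. reflexivity.
Qed.

End VariationOfConstants.

Section GreenWindow.
Context {X : CompleteNormedModule R_AbsRing} (L : R -> R -> X -> X) (Q : R -> X -> X)
  (K : R -> R) (alpha : R).
Hypotheses (HL : lin_evolution_process L) (HDich : nonuniform_exp_dichotomy L Q K alpha).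

Lemma projection_linear t : is_linear (Q t).
Proof. destruct HDich as [HQ _]. exact (proj1 (HQ t)). Qed.

Lemma unstable_backward_linear a b : a < b -> is_linear (fun y => L a b (Q b y)).
Proof.
  intro hab.
  destruct HDich as [_ [_ [Qinv [_ [_ [_ [_ [_ Est2]]]]]]]].
  destruct HL as [Llin _].
  destruct (Qinv b a ltac:(lra)) as [B1 [B2 B3]].
  assert (key : forall u y, Q a u = u -> L b a u = Q b y -> L a b (Q b y) = u).
  { intros u y h1 h2. rewrite <- h2, <- h1. apply B1. }
  split.
  - intros y1 y2. apply key.
    + rewrite (linear_plus _ (projection_linear a)), !B2. reflexivity.
    + rewrite (linear_plus _ (Llin b a ltac:(lra))), !B3.
      rewrite (linear_plus _ (projection_linear b)). reflexivity.
  - intros k y. apply key.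
    + rewrite (linear_scal _ (projection_linear a)), B2. reflexivity.
    + rewrite (linear_scal _ (Llin b a ltac:(lra))), B3.
      rewrite (linear_scal _ (projection_linear b)). reflexivity.
  - destruct HDich as [_ [_ [_ [_ [K1 _]]]]].
    exists (K b * exp (alpha * (a - b))). split.
    + pose proof (K1 b). pose proof (exp_pos (alpha * (a - b))).
      apply Rmult_lt_0_compat; lra.
    + intro y. apply Est2. exact hab.
Qed.

Lemma green_minus t tau u v :
  green L Q t tau (minus u v) = minus (green L Q t tau u) (green L Q t tau v).
Proof.
  destruct HL as [Llin _].
  unfold green. destruct (Rle_dec tau t) as [h|h].
  - rewrite (linear_minus _ _ _ (projection_linear tau)), (@minus_minus_comm X).
    apply (linear_minus _ _ _ (Llin t tau h)).
  - rewrite (linear_minus (fun y => L t tau (Q tau y)) _ _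
               (unstable_backward_linear t tau ltac:(lra))).
    unfold minus at 1. rewrite (@opp_plus X). reflexivity.
Qed.

Lemma green_bound t tau x :
  norm (green L Q t tau x) <= K tau * exp (- alpha * Rabs (t - tau)) * norm x.
Proof.
  destruct HDich as [_ [_ [_ [_ [_ [_ [_ [Est1 Est2]]]]]]]].
  unfold green. destruct (Rle_dec tau t) as [h|h].
  - rewrite (Rabs_right (t - tau)) by lra. apply Est1. exact h.
  - rewrite (@norm_opp R_AbsRing X), (Rabs_left (t - tau)) by lra.
    replace (- alpha * - (t - tau)) with (alpha * (t - tau)) by ring.
    apply Est2. lra.
Qed.

Variables g phi : R -> X.
Hypothesis Hvc : forall a b, a <= b ->
  is_RInt (fun tau => L b tau (g tau)) a b (minus (phi b) (L b a (phi a))).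

Lemma unstable_part_integral t s : t < s ->
  is_RInt (fun tau => L t tau (Q tau (g tau))) t s (minus (L t s (Q s (phi s))) (Q t (phi t))).
Proof.
  intro hts.
  pose proof (is_RInt_linear _ (unstable_backward_linear t s hts) _ _ _ _
                (Hvc t s ltac:(lra))) as H. simpl in H.
  destruct HDich as [_ [Qcomm [Qinv _]]].
  destruct HL as [_ [_ [Lcoc _]]].
  rewrite (linear_minus _ _ _ (unstable_backward_linear t s hts)) in H.
  destruct (Qinv s t ltac:(lra)) as [B1 _].
  rewrite (Qcomm s t), B1 in H by lra.
  eapply is_RInt_ext; [|exact H].
  intros tau htau. rewrite Rmin_left in htau by lra. rewrite Rmax_right in htau by lra.
  destruct (Qinv tau t ltac:(lra)) as [_ [C2 C3]].
  set (w := L t tau (Q tau (g tau))).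
  assert (Hw : L s t w = L s tau (Q tau (g tau))).
  { rewrite <- (Lcoc s tau t w) by lra. unfold w. rewrite C3. reflexivity. }
  rewrite Qcomm by lra. rewrite <- Hw. unfold w. rewrite <- C2, B1, C2. reflexivity.
Qed.

Lemma stable_part_integral a t : a <= t ->
  is_RInt (fun tau => L t tau (minus (g tau) (Q tau (g tau)))) a t
    (minus (minus (phi t) (Q t (phi t))) (L t a (minus (phi a) (Q a (phi a))))).
Proof.
  intro hat.
  pose proof (Hvc a t hat) as HV.
  pose proof (is_RInt_minus _ _ _ _ _ _ HV (is_RInt_linear _ (projection_linear t) _ _ _ _ HV))
    as H.
  destruct HDich as [_ [Qcomm _]].
  destruct HL as [Llin _].
  rewrite (linear_minus _ _ _ (projection_linear t)), (Qcomm t a), (@minus_minus_comm X),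
    <- (linear_minus _ _ _ (Llin t a hat)) in H by lra.
  eapply is_RInt_ext; [|exact H].
  intros tau htau. rewrite Rmin_left in htau by lra. rewrite Rmax_right in htau by lra.
  simpl. rewrite (Qcomm t tau) by lra.
  symmetry. apply (linear_minus _ _ _ (Llin t tau ltac:(lra))).
Qed.

Definition stable_tail (t a : R) : X := L t a (minus (phi a) (Q a (phi a))).
Definition unstable_tail (t b : R) : X := L t b (Q b (phi b)).

Lemma green_window_representation a t b : a < t < b ->
  is_RInt (fun tau => green L Q t tau (g tau)) a b
    (minus (minus (phi t) (stable_tail t a)) (unstable_tail t b)).
Proof.
  intro h.
  assert (HP : is_RInt (fun tau => green L Q t tau (g tau)) a t
    (minus (minus (phi t) (Q t (phi t))) (stable_tail t a))).
  { eapply is_RInt_ext; [|exact (stable_part_integral a t ltac:(lra))].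
    intros tau htau. rewrite Rmin_left in htau by lra. rewrite Rmax_right in htau by lra.
    unfold green. destruct (Rle_dec tau t); [reflexivity|lra]. }
  assert (HQ : is_RInt (fun tau => green L Q t tau (g tau)) t b
    (opp (minus (unstable_tail t b) (Q t (phi t))))).
  { eapply is_RInt_ext; [|exact (is_RInt_opp _ _ _ _ (unstable_part_integral t b ltac:(lra)))].
    intros tau htau. rewrite Rmin_left in htau by lra. rewrite Rmax_right in htau by lra.
    unfold green. destruct (Rle_dec tau t); [lra|reflexivity]. }
  pose proof (is_RInt_Chasles _ _ _ _ _ _ HP HQ) as H.
  rewrite (@tails_split X) in H. exact H.
Qed.

End GreenWindow.

Section GreenRepresentation.
Context {X : CompleteNormedModule R_AbsRing} (L : R -> R -> X -> X) (Q : R -> X -> X)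
  (D nu alpha : R).
Hypotheses (HL : lin_evolution_process L)
  (HDich : nonuniform_exp_dichotomy L Q (fun s => D * exp (nu * Rabs s)) alpha)
  (HD : 0 <= D) (Hna : nu < alpha).
Variables (phi : R -> X) (M : R).
Hypothesis HM : forall tau, norm (phi tau) <= M.

Lemma weighted_bound_small s w eps : 0 <= w -> 0 < eps -> w < eps / (D * M + 1) ->
  D * w * norm (phi s) < eps.
Proof.
  intros hw he hsmall.
  assert (hM : 0 <= M) by (eapply Rle_trans; [apply (norm_ge_0 (phi 0))|apply HM]).
  assert (hDM : 0 < D * M + 1) by nra.
  apply Rle_lt_trans with ((D * M + 1) * w).
  - apply Rle_trans with (D * w * M).
    + apply Rmult_le_compat_l; [apply Rmult_le_pos; lra|apply HM].
    + nra.
  - apply Rlt_le_trans with ((D * M + 1) * (eps / (D * M + 1))).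
    + apply Rmult_lt_compat_l; lra.
    + right. field. lra.
Qed.

Lemma stable_tail_vanishes t eps : 0 < eps ->
  exists A, forall a, a < A -> a <= t -> norm (stable_tail L Q phi t a) < eps.
Proof.
  intro he.
  assert (hM : 0 <= M) by (eapply Rle_trans; [apply (norm_ge_0 (phi 0))|apply HM]).
  destruct (left_weight_vanishes nu alpha Hna t (eps / (D * M + 1))
              ltac:(apply Rdiv_lt_0_compat; nra)) as [A HA].
  exists A. intros a ha hat.
  destruct HDich as [_ [_ [_ [_ [_ [_ [_ [Est1 _]]]]]]]].
  eapply Rle_lt_trans; [apply Est1, hat|].
  replace (D * exp (nu * Rabs a) * exp (- alpha * (t - a)))
    with (D * (exp (nu * Rabs a) * exp (- alpha * (t - a)))) by ring.
  apply weighted_bound_small; [|exact he|exact (HA a ha)].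
  pose proof (exp_pos (nu * Rabs a)). pose proof (exp_pos (- alpha * (t - a))). nra.
Qed.

Lemma unstable_tail_vanishes t eps : 0 < eps ->
  exists B, forall b, B < b -> t < b -> norm (unstable_tail L Q phi t b) < eps.
Proof.
  intro he.
  assert (hM : 0 <= M) by (eapply Rle_trans; [apply (norm_ge_0 (phi 0))|apply HM]).
  destruct (right_weight_vanishes nu alpha Hna t (eps / (D * M + 1))
              ltac:(apply Rdiv_lt_0_compat; nra)) as [B HB].
  exists B. intros b hb htb.
  destruct HDich as [_ [_ [_ [_ [_ [_ [_ [_ Est2]]]]]]]].
  eapply Rle_lt_trans; [apply Est2, htb|].
  replace (D * exp (nu * Rabs b) * exp (alpha * (t - b)))
    with (D * (exp (nu * Rabs b) * exp (alpha * (t - b)))) by ring.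
  apply weighted_bound_small; [|exact he|exact (HB b hb)].
  pose proof (exp_pos (nu * Rabs b)). pose proof (exp_pos (alpha * (t - b))). nra.
Qed.

Variable g : R -> X.
Hypothesis Hvc : forall a b, a <= b ->
  is_RInt (fun tau => L b tau (g tau)) a b (minus (phi b) (L b a (phi a))).

Lemma green_representation t :
  is_RInt_gen (fun tau => green L Q t tau (g tau))
    (Rbar_locally m_infty) (Rbar_locally p_infty) (phi t).
Proof.
  unfold is_RInt_gen. apply filterlimi_locally. intros eps.
  pose proof (cond_pos eps) as heps.
  destruct (stable_tail_vanishes t (eps / 2) ltac:(lra)) as [A HA].
  destruct (unstable_tail_vanishes t (eps / 2) ltac:(lra)) as [B HB].
  apply Filter_prod with (fun a => a < Rmin A t) (fun b => Rmax B t < b).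
  - exists (Rmin A t). intros; assumption.
  - exists (Rmax B t). intros; assumption.
  - intros a b ha hb. simpl.
    pose proof (Rmin_l A t). pose proof (Rmin_r A t).
    pose proof (Rmax_l B t). pose proof (Rmax_r B t).
    eexists. split; [apply (green_window_representation L Q _ alpha HL HDich g phi Hvc); lra|].
    apply norm_compat1. rewrite (@tails_defect X), norm_opp.
    eapply Rle_lt_trans; [apply norm_triangle|].
    apply Rlt_le_trans with (eps / 2 + eps / 2); [|lra].
    apply Rplus_lt_compat; [apply HA|apply HB]; lra.
Qed.

End GreenRepresentation.

Section HyperbolicSolution.
Context {X : CompleteNormedModule R_AbsRing}
  (T : R -> R -> X -> X) (f : R -> X -> X) (Df : R -> X -> X -> X)
  (Sf : R -> R -> X -> X) (xi : R -> X) (L : R -> R -> X -> X)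
  (Q : R -> X -> X) (D nu alpha : R).
Hypotheses (HT : lin_evolution_process T)
  (Hfc : forall t x, continuous (fun p : R * X => f (fst p) (snd p)) (t, x))
  (HDlin : forall t x, is_linear (Df t x))
  (HDc : forall t x eps, 0 < eps -> exists delta, 0 < delta /\
     forall t' x', Rabs (t' - t) < delta -> norm (minus x' x) < delta ->
       forall h, norm (minus (Df t' x' h) (Df t x h)) <= eps * norm h)
  (Hmild : mild_process T f Sf) (Hxi : global_solution Sf xi)
  (HL : lin_evolution_process L) (HLeq : linearized_eq T Df xi L)
  (HDich : nonuniform_exp_dichotomy L Q (fun s => D * exp (nu * Rabs s)) alpha)
  (HD : 1 <= D) (Hna : nu < alpha).

Lemma bounded_solution_representation (phi : R -> X) :
  bounded_fun phi -> global_solution Sf phi -> forall t,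
  is_RInt_gen (fun tau => green L Q t tau (forcing f Df xi phi tau))
    (Rbar_locally m_infty) (Rbar_locally p_infty) (phi t).
Proof.
  intros [M HM] Hphi t.
  apply (green_representation L Q D nu alpha HL HDich ltac:(lra) Hna phi M HM).
  intros a b hab.
  exact (variation_of_constants T f Df Sf xi L HT Hfc HDlin HDc Hmild Hxi HL HLeq
           phi Hphi a b hab).
Qed.

Section Contraction.
Variables eta eps0 : R.
Hypothesis Hrho : forall t (x : X), 0 < norm x -> norm x <= eps0 ->
  exp (nu * Rabs t) *
    norm (minus (minus (f t (plus (xi t) x)) (f t (xi t))) (Df t (xi t) x))
  <= eta * norm x.

(* The difference of forcing terms is the linearization remainder at xi,
   hence small when phi stays eps0-close to xi. *)
Lemma forcing_difference_bound (phi : R -> X) B :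
  0 <= eta -> B <= eps0 -> (forall tau, norm (minus (phi tau) (xi tau)) <= B) ->
  forall tau, exp (nu * Rabs tau) *
    norm (minus (forcing f Df xi phi tau) (forcing f Df xi xi tau)) <= eta * B.
Proof.
  intros heta hB HB tau.
  destruct (Rle_lt_or_eq_dec _ _ (norm_ge_0 (minus (phi tau) (xi tau)))) as [hx|hx].
  - set (x := minus (phi tau) (xi tau)) in hx.
    assert (Hphi : phi tau = plus (xi tau) x).
    { unfold x. rewrite plus_comm. symmetry. apply (@minus_plus_cancel X). }
    replace (minus (forcing f Df xi phi tau) (forcing f Df xi xi tau)) with
      (minus (minus (f tau (plus (xi tau) x)) (f tau (xi tau))) (Df tau (xi tau) x)).
    + eapply Rle_trans; [apply Hrho; [exact hx|apply Rle_trans with B; [apply HB|exact hB]]|].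
      apply Rmult_le_compat_l; [exact heta|apply HB].
    + unfold forcing. rewrite <- Hphi, (@minus_minus_comm X).
      unfold x. rewrite <- (linear_minus _ _ _ (HDlin tau (xi tau))). reflexivity.
  - symmetry in hx. apply norm_eq_zero, (@eq_of_minus_zero X) in hx.
    unfold forcing. rewrite hx, (@norm_minus_self X), Rmult_0_r.
    apply Rmult_le_pos; [exact heta|].
    eapply Rle_trans; [apply (norm_ge_0 (minus (phi 0) (xi 0)))|apply (HB 0)].
Qed.

(* One contraction step: a uniform bound B <= eps0 on phi - xi improves to
   D eta B (2 / alpha), integrating the Green bound against the kernel. *)
Lemma contraction_step (phi : R -> X) B :
  bounded_fun phi -> global_solution Sf phi -> bounded_fun xi -> 0 <= eta ->
  0 <= B -> B <= eps0 -> (forall tau, norm (minus (phi tau) (xi tau)) <= B) ->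
  forall t, norm (minus (phi t) (xi t)) <= D * eta * B * (2 / alpha).
Proof.
  intros Hphib Hphi Hxib heta hB0 hB HB t.
  assert (halpha : 0 < alpha).
  { destruct HDich as [_ [_ [_ [_ [_ [_ [h _]]]]]]]. exact h. }
  pose proof (is_RInt_gen_minus _ _ _ _
    (bounded_solution_representation phi Hphib Hphi t)
    (bounded_solution_representation xi Hxib Hxi t)) as Hdiff.
  pose proof (is_RInt_gen_scal _ (D * eta * B) _
    (exp_kernel_improper_integral alpha t halpha)) as Hker.
  refine (RInt_gen_norm _ _ _ _ _ _ Hdiff Hker).
  - apply Filter_prod with (fun a => a < 0) (fun b => 0 < b);
      [exists 0; auto|exists 0; auto|simpl; intros; lra].
  - apply Filter_prod with (fun _ => True) (fun _ => True);
      [exists 0; auto|exists 0; auto|].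
    intros a b _ _ tau _. simpl.
    rewrite <- (green_minus L Q _ alpha HL HDich).
    eapply Rle_trans; [apply (green_bound L Q _ alpha HDich)|].
    pose proof (forcing_difference_bound phi B heta hB HB tau) as Hf.
    pose proof (exp_pos (- alpha * Rabs (t - tau))).
    unfold scal, exp_kernel; simpl; unfold mult; simpl.
    replace (D * exp (nu * Rabs tau) * exp (- alpha * Rabs (t - tau)) *
             norm (minus (forcing f Df xi phi tau) (forcing f Df xi xi tau)))
      with (D * exp (- alpha * Rabs (t - tau)) * (exp (nu * Rabs tau) *
             norm (minus (forcing f Df xi phi tau) (forcing f Df xi xi tau)))) by ring.
    replace (D * eta * B * exp (- alpha * Rabs (t - tau)))
      with (D * exp (- alpha * Rabs (t - tau)) * (eta * B)) by ring.
    apply Rmult_le_compat_l; [apply Rmult_le_pos; lra|exact Hf].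
Qed.

End Contraction.

(* Part (b): choosing eta = alpha / (4 D) makes each contraction step halve
   the distance to xi, so a bounded solution staying eps0-close to xi is xi. *)
Lemma hyperbolic_solution_isolated :
  bounded_fun xi ->
  (forall eta, 0 < eta -> exists eps0, 0 < eps0 /\
     forall t (x : X), 0 < norm x -> norm x <= eps0 ->
       exp (nu * Rabs t) *
         norm (minus (minus (f t (plus (xi t) x)) (f t (xi t))) (Df t (xi t) x))
       <= eta * norm x) ->
  exists eps, 0 < eps /\
    forall phi : R -> X, bounded_fun phi -> global_solution Sf phi ->
      (forall t, norm (minus (phi t) (xi t)) <= eps) ->
      forall t, phi t = xi t.
Proof.
  intros Hxib Hrho.
  assert (halpha : 0 < alpha).
  { destruct HDich as [_ [_ [_ [_ [_ [_ [h _]]]]]]]. exact h. }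
  set (eta := alpha / (4 * D)).
  assert (heta : 0 < eta) by (unfold eta; apply Rdiv_lt_0_compat; lra).
  destruct (Hrho eta heta) as [eps0 [he0 H0]].
  exists eps0. split; [exact he0|]. intros phi Hphib Hphi Hclose.
  assert (Hhalve : forall n tau, norm (minus (phi tau) (xi tau)) <= eps0 * (1 / 2) ^ n).
  { induction n as [|n IH]; intro tau.
    - rewrite pow_O, Rmult_1_r. apply Hclose.
    - assert (hp : 0 < (1 / 2) ^ n) by (apply pow_lt; lra).
      assert (hp1 : (1 / 2) ^ n <= 1)
        by (apply Rle_trans with (1 ^ n); [apply pow_incr; lra|rewrite pow1; lra]).
      eapply Rle_trans;
        [apply (contraction_step eta eps0 H0 phi (eps0 * (1 / 2) ^ n) Hphib Hphi Hxib);
         [lra|nra|nra|exact IH]|].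
      right. unfold eta. simpl. field. lra. }
  intro t. apply eq_of_norm_small. intros e he.
  destruct (pow_lt_1_zero (1 / 2) ltac:(rewrite Rabs_right; lra) (e / eps0)
              ltac:(apply Rdiv_lt_0_compat; lra)) as [N HN].
  specialize (HN N (le_n N)). rewrite Rabs_right in HN by (apply Rle_ge, pow_le; lra).
  eapply Rle_trans; [apply (Hhalve N t)|].
  apply Rle_trans with (eps0 * (e / eps0)); [apply Rmult_le_compat_l; lra|].
  right. field. lra.
Qed.

End HyperbolicSolution.

Theorem mainTheorem10
  (X : CompleteNormedModule R_AbsRing)
  (T : R -> R -> X -> X) (f : R -> X -> X) (Df : R -> X -> X -> X)
  (Sf : R -> R -> X -> X) (xi : R -> X) (Lf : R -> R -> X -> X)
  (Q : R -> X -> X) (D nu alpha : R) :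
  lin_evolution_process T ->
  (* f continuous *)
  (forall t x, continuous (fun p : R * X => f (fst p) (snd p)) (t, x)) ->
  (* f differentiable in x with derivative Df t x *)
  (forall t x, filterdiff (f t) (locally x) (Df t x)) ->
  (* (t,x) |-> D_x f(t,x) continuous in operator norm *)
  (forall t x eps, 0 < eps -> exists delta, 0 < delta /\
     forall t' x', Rabs (t' - t) < delta -> norm (minus x' x) < delta ->
       forall h, norm (minus (Df t' x' h) (Df t x h)) <= eps * norm h) ->
  mild_process T f Sf ->
  global_solution Sf xi ->
  lin_evolution_process Lf ->
  linearized_eq T Df xi Lf ->
  1 <= D -> 0 <= nu -> nu < alpha ->
  nonuniform_exp_dichotomy Lf Q (fun s => D * exp (nu * Rabs s)) alpha ->
  (* (a) *)
  (forall phi : R -> X, bounded_fun phi -> global_solution Sf phi ->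
     forall t,
       is_RInt_gen
         (fun tau => green Lf Q t tau
                       (minus (f tau (phi tau)) (Df tau (xi tau) (phi tau))))
         (Rbar_locally m_infty) (Rbar_locally p_infty) (phi t)) /\
  (* (b) *)
  (bounded_fun xi ->
   (forall eta, 0 < eta -> exists eps0, 0 < eps0 /\
      forall t (x : X), 0 < norm x -> norm x <= eps0 ->
        exp (nu * Rabs t) *
          norm (minus (minus (f t (plus (xi t) x)) (f t (xi t))) (Df t (xi t) x))
        <= eta * norm x) ->
   exists eps, 0 < eps /\
     forall phi : R -> X, bounded_fun phi -> global_solution Sf phi ->
       (forall t, norm (minus (phi t) (xi t)) <= eps) ->
       forall t, phi t = xi t).
Proof.
  intros HT Hfc Hfd HDc Hmild Hxi HL HLeq HD _ Hna HDich.
  (* only the linearity of the derivative D_x f(t, x) is needed *)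
  assert (HDlin : forall t x, is_linear (Df t x)) by (intros t x; apply (Hfd t x)).
  split.
  - exact (bounded_solution_representation T f Df Sf xi Lf Q D nu alpha
             HT Hfc HDlin HDc Hmild Hxi HL HLeq HDich HD Hna).
  - exact (hyperbolic_solution_isolated T f Df Sf xi Lf Q D nu alpha
             HT Hfc HDlin HDc Hmild Hxi HL HLeq HDich HD Hna).
Qed.
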